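(* Let $f=c_{20}U_1^2+c_{11}U_1U_2+c_{02}U_2^2\in\mathbb C[U_1,U_2]$ with $c_{20},c_{11},c_{02}\in\mathbb C$. If $\mathcal L(f^m)=0$ for all $m\ge1$, then $f=0$.
   Context: $\mathcal L:\mathbb C[U_1,U_2]\to\mathbb C$ is the $\mathbb C$-linear map defined on monomials by $\mathcal L(U_1^{\ell_1}U_2^{\ell_2})=\ell_1!\,\ell_2!$. *)

From HB Require Import structures.
From mathcomp Require Import all_boot all_order all_algebra.
Set Implicit Arguments. Unset Strict Implicit. Unset Printing Implicit Defensive.
Import Order.TTheory GRing.Theory Num.Theory.
Local Open Scope ring_scope.

(* bivariate polynomials over R: coefficient of U1^i U2^j in p is (p`_j)`_i *)
Definition bipoly (R : nzRingType) := {poly {poly R}}.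

Definition U1 {R : nzRingType} : {poly {poly R}} := ('X)%:P.
Definition U2 {R : nzRingType} : {poly {poly R}} := 'X.
Definition bconst {R : nzRingType} (c : R) : {poly {poly R}} := (c%:P)%:P.

Definition Lfun {R : nzRingType} (p : {poly {poly R}}) : R :=
  \sum_(j < size p) \sum_(i < size p`_j) (p`_j)`_i * ((i`! * j`!)%N)%:R.

(* With f = a U1^2 + b U1 U2 + c U2^2, the conditions L(f) = 0, L(f^2) = 0 and
   L(f^3) = 0 are polynomial equations in a, b, c.  The first gives
   b = -2(a + c); substituting, the second becomes 2a^2 - ac + 2c^2 = 0 and the
   third 2a^3 - a^2 c - a c^2 + 2c^3 = 0.  Their combination forces
   ac(a + c) = 0, and each factor together with the quadratic forces a = c = 0,
   so in characteristic 0 all three coefficients vanish. *)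
From HB Require Import structures.
From mathcomp Require Import all_boot all_order all_algebra.
From mathcomp Require Import ring.
Import Order.TTheory GRing.Theory Num.Theory.
Local Open Scope ring_scope.

Section CoefSum.
Variables (R : nzRingType) (V : zmodType) (G : nat -> R -> V).
Hypothesis G0 : forall i, G i 0 = 0.

Definition coef_sum (p : {poly R}) : V := \sum_(i < size p) G i p`_i.

Lemma coef_sum_wide {n} {p : {poly R}} :
  (size p <= n)%N -> coef_sum p = \sum_(i < n) G i p`_i.
Proof.
move=> le_pn; rewrite /coef_sum (big_ord_widen n (fun i => G i p`_i) le_pn).
rewrite big_mkcond; apply: eq_bigr => i _.
by case: ltnP => // le_pi; rewrite nth_default.
Qed.

Lemma coef_sum0 : coef_sum 0 = 0.
Proof. by rewrite /coef_sum size_poly0 big_ord0. Qed.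

Lemma coef_sumCXn c k : coef_sum (c%:P * 'X^k) = G k c.
Proof.
have size_cXk : (size (c *: 'X^k) <= k.+1)%N.
  by rewrite (leq_trans (size_scale_leq _ _)) ?size_polyXn.
rewrite mul_polyC (coef_sum_wide size_cXk).
rewrite big_ord_recr /= big1 ?add0r => [|i _]; rewrite coefZ coefXn.
  by rewrite eqxx mulr1.
by rewrite ltn_eqF // mulr0.
Qed.

Hypothesis GD : forall i, {morph G i : x y / x + y}.

Lemma coef_sumD (p q : {poly R}) : coef_sum (p + q) = coef_sum p + coef_sum q.
Proof.
set n := maxn (size p) (size q).
rewrite !(@coef_sum_wide n) ?leq_maxl ?leq_maxr ?(leq_trans (size_polyD _ _)) //.
by rewrite -big_split; apply: eq_bigr => i _; rewrite coefD GD.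
Qed.

End CoefSum.

Arguments coef_sum {R V} G p.

Section Lfun.
Variable R : comNzRingType.

Lemma LfunE (p : {poly {poly R}}) :
  Lfun p = coef_sum (fun j => coef_sum (fun i x => x * (i`! * j`!)%:R)) p.
Proof. by []. Qed.

Lemma Lfun0 : Lfun (0 : {poly {poly R}}) = 0.
Proof. by rewrite LfunE coef_sum0. Qed.

Lemma LfunD (p q : {poly {poly R}}) : Lfun (p + q) = Lfun p + Lfun q.
Proof.
rewrite !LfunE coef_sumD // => [j|j x y]; first by rewrite coef_sum0.
by rewrite coef_sumD // => [i|i x' y']; rewrite ?mul0r ?mulrDl.
Qed.

Definition bimonomial (k : R) (i j : nat) : {poly {poly R}} :=
  bconst k * U1 ^+ i * U2 ^+ j.

Lemma Lfun_bimonomial k i j : Lfun (bimonomial k i j) = k * (i`! * j`!)%:R.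
Proof.
rewrite /bimonomial /bconst /U1 /U2 -rmorphXn -polyCM LfunE coef_sumCXn.
  by rewrite coef_sumCXn // => i'; rewrite mul0r.
by move=> j'; rewrite coef_sum0 // => i'; rewrite mul0r.
Qed.

Lemma bimonomialM a i j b k l :
  bimonomial a i j * bimonomial b k l = bimonomial (a * b) (i + k) (j + l).
Proof. by rewrite /bimonomial /bconst !polyCM !exprD; ring. Qed.

Definition poly_of_terms (s : seq (R * nat * nat)) : {poly {poly R}} :=
  \sum_(t <- s) bimonomial t.1.1 t.1.2 t.2.

Definition mul_term (t u : R * nat * nat) : R * nat * nat :=
  (t.1.1 * u.1.1, (t.1.2 + u.1.2)%N, (t.2 + u.2)%N).

Lemma poly_of_termsM s s' :
  poly_of_terms s * poly_of_terms s' =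
    poly_of_terms [seq mul_term t u | t <- s, u <- s'].
Proof.
rewrite /poly_of_terms big_allpairs_dep mulr_suml; apply: eq_bigr => t _.
by rewrite mulr_sumr; apply: eq_bigr => u _; rewrite bimonomialM.
Qed.

Lemma Lfun_poly_of_terms s :
  Lfun (poly_of_terms s) = \sum_(t <- s) t.1.1 * (t.1.2`! * t.2`!)%:R.
Proof.
elim: s => [|t s IHs]; first by rewrite /poly_of_terms !big_nil Lfun0.
by rewrite /poly_of_terms !big_cons LfunD Lfun_bimonomial -IHs.
Qed.

End Lfun.

Arguments poly_of_terms {R} s.

Section BinaryQuadratic.
Variables (R : comNzRingType) (a b c : R).

Let f := poly_of_terms [:: (a, 2, 0); (b, 1, 1); (c, 0, 2)]%N.

Lemma Lfun_quadratic : Lfun f = 2 * a + b + 2 * c.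
Proof. by rewrite Lfun_poly_of_terms !big_cons big_nil /= !factS fact0; ring. Qed.

Lemma Lfun_quadratic_sqr :
  Lfun (f ^+ 2) = 24 * a ^+ 2 + 12 * a * b + 4 * b ^+ 2 + 8 * a * c
    + 12 * b * c + 24 * c ^+ 2.
Proof.
rewrite expr2 poly_of_termsM Lfun_poly_of_terms !big_cons big_nil /=.
by rewrite !factS fact0; ring.
Qed.

Lemma Lfun_quadratic_cube :
  Lfun (f ^+ 3) = 720 * a ^+ 3 + 360 * a ^+ 2 * b + 144 * a ^+ 2 * c + 144 * a * b ^+ 2
    + 36 * b ^+ 3 + 216 * a * b * c + 144 * a * c ^+ 2 + 144 * b ^+ 2 * c
    + 360 * b * c ^+ 2 + 720 * c ^+ 3.
Proof.
rewrite exprS expr2 !poly_of_termsM Lfun_poly_of_terms !big_cons big_nil /=.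
by rewrite !factS fact0; ring.
Qed.

End BinaryQuadratic.

Section Moments.
Variable R : numDomainType.

Lemma natr_mul_eq0 {n} {x : R} : (0 < n)%N -> n%:R * x = 0 -> x = 0.
Proof. by move=> n_gt0 /eqP; rewrite mulf_eq0 pnatr_eq0 gtn_eqF //= => /eqP. Qed.

Lemma binary_form_eq0 (a c : R) :
  2 * a ^+ 2 - a * c + 2 * c ^+ 2 = 0 -> a * c * (a + c) = 0 -> a = 0 /\ c = 0.
Proof.
have sqr_eq0 k (x : R) : (0 < k)%N -> k%:R * x ^+ 2 = 0 -> x = 0.
  by move=> k_gt0 /(natr_mul_eq0 k_gt0)/eqP; rewrite sqrf_eq0 => /eqP.
move=> q0 /eqP; rewrite !mulf_eq0 -orbA addr_eq0 => /or3P[] /eqP ac0.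
- by split=> //; apply: (@sqr_eq0 2) => //; rewrite -q0 ac0; ring.
- by split=> //; apply: (@sqr_eq0 2) => //; rewrite -q0 ac0; ring.
- have c0 : c = 0 by apply: (@sqr_eq0 5) => //; rewrite -q0 ac0; ring.
  by rewrite ac0 c0 oppr0.
Qed.

Lemma quadratic_moments_eq0 (a b c : R) :
  let f := poly_of_terms [:: (a, 2, 0); (b, 1, 1); (c, 0, 2)]%N in
  Lfun f = 0 -> Lfun (f ^+ 2) = 0 -> Lfun (f ^+ 3) = 0 -> [/\ a = 0, b = 0 & c = 0].
Proof.
rewrite /= Lfun_quadratic Lfun_quadratic_sqr Lfun_quadratic_cube => L1 L2 L3.
have b_def : b = - 2 * (a + c) by rewrite -[b]subr0 -L1; ring.
rewrite {}b_def in L2 L3 *.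
have q0 : 2 * a ^+ 2 - a * c + 2 * c ^+ 2 = 0.
  by apply: (@natr_mul_eq0 8) => //; rewrite -L2; ring.
have r0 : 2 * a ^+ 3 - a ^+ 2 * c - a * c ^+ 2 + 2 * c ^+ 3 = 0.
  by apply: (@natr_mul_eq0 144) => //; rewrite -L3; ring.
have [|a0 c0] := @binary_form_eq0 a c q0.
  apply: (@natr_mul_eq0 2) => //.
  have -> : 2%:R * (a * c * (a + c)) = (a + c) * (2 * a ^+ 2 - a * c + 2 * c ^+ 2)
      - (2 * a ^+ 3 - a ^+ 2 * c - a * c ^+ 2 + 2 * c ^+ 3) by ring.
  by rewrite q0 r0 mulr0 subr0.
by rewrite a0 c0; split=> //; ring.
Qed.

End Moments.

Theorem proposition4p14 (C : numClosedFieldType) (c20 c11 c02 : C) :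
  let f : {poly {poly C}} :=
    bconst c20 * U1 ^+ 2 + bconst c11 * (U1 * U2) + bconst c02 * U2 ^+ 2 in
  (forall m : nat, (1 <= m)%N -> Lfun (f ^+ m) = 0) -> f = 0.
Proof.
move=> f Lf0.
have f_terms : f = poly_of_terms [:: (c20, 2, 0); (c11, 1, 1); (c02, 0, 2)]%N.
  by rewrite /f /poly_of_terms !big_cons big_nil /bimonomial /=; ring.
have [] := @quadratic_moments_eq0 C c20 c11 c02.
- by rewrite -f_terms -[f]expr1 Lf0.
- by rewrite -f_terms Lf0.
- by rewrite -f_terms Lf0.
by rewrite /f => -> -> ->; rewrite /bconst !polyC0 !mul0r !addr0.
Qed.
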